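(* Let $I$ be a regular and $\mathcal{H}$-positively-homogeneous conditional indicator w.r.t. $\mathcal{H}$. Then for all $X\in\mathbb{D}_I$ and $h\in\mathbb{L}^0(\mathbb{R},\mathcal{H})$, $$I(hX)=h^+I(X)+h^-I(-X),$$ where $h^+=\max(h,0)$ and $h^-=\max(-h,0)$.
   Context: Let $(\Omega,\mathcal{F},\mathbb{P})$ be a probability space with $\mathcal{F}$ complete, and $\mathcal{H}\subseteq\mathcal{F}$ a complete sub-$\sigma$-algebra. $\overline{\mathbb{R}}=\mathbb{R}\cup\{\pm\infty\}$ with conventions $r\pm\infty=\pm\infty$, $\infty-\infty=0$, $\infty+\infty=\infty$, $0\times(\pm\infty)=0$; $\mathbb{L}^0(G,\mathcal{G})$ is the set of $\mathcal{G}$-measurable random variables a.s. valued in $G$. $\operatorname{ess\,sup}_{\mathcal{H}}(X)$ is the smallest $\mathcal{H}$-measurable random variable dominating $X$ a.s., $\operatorname{ess\,inf}_{\mathcal{H}}(X)=-\operatorname{ess\,sup}_{\mathcal{H}}(-X)$. A conditional indicator w.r.t. $\mathcal{H}$ is a map $I:\mathbb{D}_I\to\mathbb{L}^0(\overline{\mathbb{R}},\mathcal{H})$, $0\in\mathbb{D}_I\subseteq\mathbb{L}^0(\overline{\mathbb{R}},\mathcal{F})$, with $I(X)\in[\operatorname{ess\,inf}_{\mathcal{H}}(X),\operatorname{ess\,sup}_{\mathcal{H}}(X)]$ a.s. and $\mathbb{D}_I+\mathbb{L}^0(\overline{\mathbb{R}},\mathcal{H})\subseteq\mathbb{D}_I$.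 $\mathbb{D}_I$ is $\mathcal{H}$-decomposable if $X1_H+Y1_{\Omega\setminus H}\in\mathbb{D}_I$ for all $X,Y\in\mathbb{D}_I$, $H\in\mathcal{H}$. $I$ is regular if $\mathbb{D}_I$ is $\mathcal{H}$-decomposable and for $X,Y\in\mathbb{D}_I$, $H\in\mathcal{H}$, $X1_H=Y1_H$ implies $I(X)1_H=I(Y)1_H$. $I$ is $\mathcal{H}$-positively-homogeneous if for every $\alpha\in\mathbb{L}^0(\mathbb{R}_+,\mathcal{H})$, $\alpha\mathbb{D}_I\subseteq\mathbb{D}_I$ and $I(\alpha X)=\alpha I(X)$ for $X\in\mathbb{D}_I$. *)

From HB Require Import structures.
From mathcomp Require Import all_boot all_order all_algebra.
From mathcomp Require Import all_classical all_reals all_analysis measurable_realfun.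
Set Implicit Arguments. Unset Strict Implicit. Unset Printing Implicit Defensive.
Import Order.TTheory GRing.Theory Num.Theory.
Local Open Scope classical_set_scope.
Local Open Scope ring_scope.
Local Open Scope ereal_scope.

Section Defs.
Context {d : measure_display} {T : measurableType d} {R : realType}.
Variable P : probability T R.

Definition as_ (Q : T -> Prop) : Prop := P.-negligible [set w | ~ Q w].

Definition F_complete : Prop := forall N, P.-negligible N -> measurable N.

Definition complete_sub_sigma (H : set (set T)) : Prop :=
  [/\ sigma_algebra setT H, (forall A, H A -> measurable A)
    & (forall N, P.-negligible N -> H N)].

Definition Hmeas (H : set (set T)) (f : T -> \bar R) : Prop :=
  forall B : set (\bar R), measurable B -> H (f @^-1` B).
Definition HmeasR (H : set (set T)) (f : T -> R) : Prop :=
  forall B : set R, measurable B -> H (f @^-1` B).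

Definition addE (x y : \bar R) : \bar R :=
  match x, y with
  | +oo, -oo => 0
  | -oo, +oo => 0
  | _, _ => x + y
  end.
(* (mathcomp's product on \bar R already satisfies 0 * (+-oo) = 0) *)

Definition L0F (X : T -> \bar R) : Prop := measurable_fun setT X.
Definition L0H (H : set (set T)) (X : T -> \bar R) : Prop := Hmeas H X.

Definition is_cess_sup (H : set (set T)) (X S : T -> \bar R) : Prop :=
  [/\ Hmeas H S, as_ (fun w => X w <= S w)
    & forall S', Hmeas H S' -> as_ (fun w => X w <= S' w) ->
                 as_ (fun w => S w <= S' w)].
Definition is_cess_inf (H : set (set T)) (X S : T -> \bar R) : Prop :=
  is_cess_sup H (fun w => - X w) (fun w => - S w).

(* Random variables are represented by functions; the domain D and the
   map I are required to be compatible with a.s. equality (they are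
   defined on equivalence classes in the paper). *)
Definition cond_indicator (H : set (set T)) (D : set (T -> \bar R))
    (I : (T -> \bar R) -> (T -> \bar R)) : Prop :=
  [/\ D (fun _ => 0),
      (forall X, D X -> L0F X),
      (forall X Y, D X -> L0F Y -> as_ (fun w => X w = Y w) -> D Y),
      (forall X Y, D X -> D Y -> as_ (fun w => X w = Y w) ->
                   as_ (fun w => I X w = I Y w)) &
      (forall X, D X -> L0H H (I X))] /\
  [/\ (forall X, D X -> forall S, is_cess_sup H X S ->
                 as_ (fun w => I X w <= S w)),
      (forall X, D X -> forall S, is_cess_inf H X S ->
                 as_ (fun w => S w <= I X w)) &
      (forall X Y, D X -> L0H H Y -> D (fun w => addE (X w) (Y w)))].

Definition indic1 (A : set T) (w : T) : \bar R := ((\1_A w : R)%:E).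

Definition H_decomposable (H : set (set T)) (D : set (T -> \bar R)) : Prop :=
  forall X Y A, D X -> D Y -> H A ->
    D (fun w => addE (X w * indic1 A w) (Y w * indic1 (~` A) w)).

Definition regular (H : set (set T)) (D : set (T -> \bar R))
    (I : (T -> \bar R) -> (T -> \bar R)) : Prop :=
  H_decomposable H D /\
  forall X Y A, D X -> D Y -> H A ->
    as_ (fun w => X w * indic1 A w = Y w * indic1 A w) ->
    as_ (fun w => I X w * indic1 A w = I Y w * indic1 A w).

Definition H_pos_homogeneous (H : set (set T)) (D : set (T -> \bar R))
    (I : (T -> \bar R) -> (T -> \bar R)) : Prop :=
  forall alpha : T -> R, HmeasR H alpha -> as_ (fun w => (0 <= alpha w)%R) ->
    forall X, D X ->
      D (fun w => (alpha w)%:E * X w) /\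
      as_ (fun w => I (fun w' => (alpha w')%:E * X w') w = (alpha w)%:E * I X w).

End Defs.

From HB Require Import structures.
From mathcomp Require Import all_boot all_order all_algebra.
From mathcomp Require Import all_classical all_reals all_analysis measurable_realfun.
Import Order.TTheory GRing.Theory Num.Theory.
Local Open Scope classical_set_scope.
Local Open Scope ring_scope.
Local Open Scope ereal_scope.

(* Split Omega along the H-set A = {h >= 0}.  On A, hX = h^+ X, and on its
   complement hX = h^- (-X).  Decomposability of D puts hX in D; regularity
   says that I only sees X on A (resp. on its complement), so there I(hX)
   equals I(h^+ X) = h^+ I(X) (resp. I(h^- (-X)) = h^- I(-X)) by
   H-positive homogeneity, and on each piece the other term vanishes. *)

Section almost_surely.
Context {d : measure_display} {T : measurableType d} {R : realType}.
Context {P : probability T R}.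

Lemma as_forall {Q : T -> Prop} : (forall w, Q w) -> as_ P Q.
Proof.
move=> allQ; apply: (negligibleS _ (negligible_set0 P)) => w /= nQ.
exact: nQ (allQ w).
Qed.

Lemma as_and {Q1 Q2 : T -> Prop} :
  as_ P Q1 -> as_ P Q2 -> as_ P (fun w => Q1 w /\ Q2 w).
Proof.
move=> aQ1 aQ2; apply: (negligibleS _ (negligibleU aQ1 aQ2)) => w /= nQ.
by have [q1|] := pselect (Q1 w); [right => q2; exact: nQ | left].
Qed.

Lemma as_mono {Q1 Q2 : T -> Prop} :
  as_ P Q1 -> (forall w, Q1 w -> Q2 w) -> as_ P Q2.
Proof.
move=> aQ1 Q12; apply: (negligibleS _ aQ1) => w /= nQ2 q1.
exact: nQ2 (Q12 w q1).
Qed.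

End almost_surely.

Section H_measurability.
Context {d : measure_display} {T : measurableType d} {R : realType}.
Context {H : set (set T)}.

Lemma HmeasR_comp (h : T -> R) (f : R -> R) :
  HmeasR H h -> measurable_fun setT f -> HmeasR H (f \o h).
Proof.
move=> hH mf B mB; have := mf measurableT B mB.
by rewrite setTI => /hH.
Qed.

Lemma HmeasR_opp {h : T -> R} : HmeasR H h -> HmeasR H (fun w => - h w)%R.
Proof. by move=> hH; apply: (HmeasR_comp h -%R hH); exact: oppr_measurable. Qed.

Lemma HmeasR_pos_part {h : T -> R} :
  HmeasR H h -> HmeasR H (fun w => Num.max (h w) 0)%R.
Proof.
move=> hH; apply: (HmeasR_comp h (fun x => Num.max x 0)%R hH).
exact: (measurable_maxr (f := id) (g := cst 0%R)).
Qed.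

Lemma HmeasR_ge0_set {h : T -> R} : HmeasR H h -> H [set w | (0 <= h w)%R].
Proof.
move=> /(_ _ (measurable_itv `[0%R, +oo[)); congr H.
by apply/seteqP; split=> w /=; rewrite in_itv /= andbT.
Qed.

End H_measurability.

Section pasting.
Context {d : measure_display} {T : measurableType d} {R : realType}.

Lemma addE0 (x : \bar R) : addE x 0 = x.
Proof. by case: x => [r| |] //=; rewrite adde0. Qed.

Lemma add0E (x : \bar R) : addE 0 x = x.
Proof. by case: x => [r| |] //=; rewrite add0e. Qed.

Lemma indic1_in (A : set T) w : A w -> indic1 (R := R) A w = 1.
Proof. by move=> Aw; rewrite /indic1 indicE mem_set. Qed.

Lemma indic1_notin (A : set T) w : ~ A w -> indic1 (R := R) A w = 0.
Proof. by move=> nAw; rewrite /indic1 indicE memNset. Qed.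

End pasting.

Section regular_indicator.
Context {d : measure_display} {T : measurableType d} {R : realType}.
Context {P : probability T R} {H : set (set T)} {D : set (T -> \bar R)}.
Context {I : (T -> \bar R) -> (T -> \bar R)}.

Lemma H_decomposable_paste {A : set T} {X Y Z : T -> \bar R} :
  H_decomposable H D -> D X -> D Y -> H A ->
  (forall w, A w -> Z w = X w) -> (forall w, ~ A w -> Z w = Y w) -> D Z.
Proof.
move=> dec DX DY HA ZX ZY.
suff -> : Z = fun w => addE (X w * indic1 A w) (Y w * indic1 (~` A) w).
  exact: dec.
apply: funext => w; have [Aw|nAw] := pselect (A w).
  by rewrite ZX // indic1_in // indic1_notin ?mule1 ?mule0 ?addE0.
by rewrite ZY // indic1_notin // indic1_in ?mule1 ?mule0 ?add0E.
Qed.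

Lemma regular_eq_on {A : set T} {X Y : T -> \bar R} :
  regular P H D I -> D X -> D Y -> H A -> (forall w, A w -> X w = Y w) ->
  as_ P (fun w => A w -> I X w = I Y w).
Proof.
move=> [_ reg] DX DY HA XY.
have XY1 : as_ P (fun w => X w * indic1 A w = Y w * indic1 A w).
  apply: as_forall => w; have [Aw|nAw] := pselect (A w); first by rewrite XY.
  by rewrite indic1_notin // !mule0.
apply: (as_mono (reg X Y A DX DY HA XY1)) => w + Aw.
by rewrite indic1_in // !mule1.
Qed.

End regular_indicator.

Theorem mainTheorem6 (d : measure_display) (T : measurableType d) (R : realType)
  (P : probability T R) (H : set (set T)) (D : set (T -> \bar R))
  (I : (T -> \bar R) -> (T -> \bar R)) :
  F_complete P -> complete_sub_sigma P H ->
  cond_indicator P H D I -> regular P H D I -> H_pos_homogeneous P H D I ->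
  forall X : T -> \bar R, D X -> D (fun w => - X w) ->
  forall h : T -> R, HmeasR H h ->
    D (fun w => (h w)%:E * X w) /\
    as_ P (fun w => I (fun w' => (h w')%:E * X w') w =
                    (Num.max (h w) 0%R)%:E * I X w
                    + (Num.max (- h w) 0%R)%:E * I (fun w' => - X w') w).
Proof.
move=> _ [[_ HC _] _ _] _ reg hom X DX DNX h hH.
set hp := fun w => Num.max (h w) 0%R; set hn := fun w => Num.max (- h w)%R 0%R.
set A := [set w | (0 <= h w)%R].
have HA : H A by exact: HmeasR_ge0_set.
have HAc : H (~` A) by rewrite -setTD; exact: HC.
have hp_ge0 : as_ P (fun w => (0 <= hp w)%R).
  by apply: as_forall => w; rewrite le_max lexx orbT.
have hn_ge0 : as_ P (fun w => (0 <= hn w)%R).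
  by apply: as_forall => w; rewrite le_max lexx orbT.
have [Dhp Ihp] := hom hp (HmeasR_pos_part hH) hp_ge0 X DX.
have [Dhn Ihn] := hom hn (HmeasR_pos_part (HmeasR_opp hH)) hn_ge0 _ DNX.
have hX_A w : A w -> (h w)%:E * X w = (hp w)%:E * X w.
  by move=> hw; rewrite /hp max_l.
have hX_Ac w : ~ A w -> (h w)%:E * X w = (hn w)%:E * - X w.
  move=> /negP; rewrite -ltNge => hw.
  by rewrite /hn max_l ?oppr_ge0 ?ltW // EFinN muleNN.
have DhX := H_decomposable_paste reg.1 Dhp Dhn HA hX_A hX_Ac.
split => //.
have IA := regular_eq_on reg DhX Dhp HA hX_A.
have IAc := regular_eq_on reg DhX Dhn HAc hX_Ac.
apply: (as_mono (as_and (as_and IA Ihp) (as_and IAc Ihn))).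
move=> w [[eA ep] [eAc en]].
have [Aw|nAw] := pselect (A w).
  by rewrite eA // ep [Num.max (- h w)%R _]max_r ?oppr_le0 // mul0e adde0.
have hw : (h w < 0)%R by rewrite ltNge; exact/negP.
by rewrite eAc // en [Num.max (h w) _]max_r ?mul0e ?add0e // ltW.
Qed.
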